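(* Let $p$ be a prime and $n$ a positive integer. Then $n\in\mathcal{M}_p^{(1)}\cup\mathcal{M}_p^{(2)}$ if and only if $p\mid n$, $n/p\in\mathcal{W}$ and $p\in\mathfrak{M}_{n/p}$.
   Context: For positive integers $k,n$ let $S_k(n)=\sum_{i=1}^{n} i^k$. For an integer $a$, $\mathcal{M}_a$ denotes the set of positive integers $n$ such that $S_n(n)\equiv a\pmod{n}$. For a prime $p$: $\mathcal{M}_p^{(1)}=\{n\in\mathcal{M}_p : p\mid n,\ p^2\nmid n\}$ and $\mathcal{M}_p^{(2)}=\{n\in\mathcal{M}_p : p^2\mid n,\ p^3\nmid n\}$. A positive integer $n$ is a weak primary pseudoperfect number if $\sum_{q\mid n,\ q\text{ prime}} \frac{n}{q}+1\equiv 0\pmod{n}$; $\mathcal{W}$ denotes the set of such numbers. For a positive integer $Q$, $\mathfrak{M}_Q=\{m\in\mathbb{N} : S_{Qm}(Qm)\equiv m\pmod{Qm}\}$. *)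

From mathcomp Require Import all_boot.
Set Implicit Arguments. Unset Strict Implicit. Unset Printing Implicit Defensive.

Definition S (k n : nat) : nat := \sum_(1 <= i < n.+1) i ^ k.

Definition inM (a n : nat) : Prop := 0 < n /\ S n n = a %[mod n].

Definition inM1 (p n : nat) : Prop := inM p n /\ p %| n /\ ~~ (p ^ 2 %| n).
Definition inM2 (p n : nat) : Prop := inM p n /\ p ^ 2 %| n /\ ~~ (p ^ 3 %| n).

Definition inW (n : nat) : Prop :=
  0 < n /\ (\sum_(q <- primes n) n %/ q) + 1 = 0 %[mod n].

Definition inFrakM (Q m : nat) : Prop := 0 < m /\ S (Q * m) (Q * m) = m %[mod Q * m].

(** If [p %| n], write [n = m * p].  The congruence [S n n = p %[mod n]] is
    studied one prime power [q ^ e] exactly dividing [n] at a time.  For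
    [q ^ e %| k], the power sum [S k (q ^ e)] is [0] modulo [q ^ e] unless
    [q.-1 %| k], in which case every unit contributes [1] and it is
    [q.-1 * q ^ e.-1]; by periodicity [S n n] is then [- n %/ q] modulo [q ^ e]
    whenever it is nonzero there.  As [p] is nonzero modulo every such [q ^ e]
    with [q %| m], this yields [q ^ e %| p * (m %/ q + 1)], i.e. the
    [q]-part of [m] divides [m %/ q + 1]: exactly the condition [m \in W].
    Conversely [p ^ 3 %| n] would force [p ^ 2 %| S n n], so [p ^ 2 %| p];
    hence [n] lies in [M_p^(1)] or [M_p^(2)]. *)

From mathcomp Require Import all_boot all_algebra cyclic finfield.

Lemma sum_periodic (f : nat -> nat) d a :
  (forall i, f (i + d) = f i) ->
  \sum_(1 <= i < (a * d).+1) f i = a * \sum_(1 <= i < d.+1) f i.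
Proof.
move=> fP; have fPM b i : f (i + b * d) = f i.
  by elim: b => [|b IHb]; rewrite ?addn0 // mulSn (addnC d) addnA fP.
elim: a => [|a IHa]; first by rewrite big_geq.
rewrite (@big_cat_nat _ _ _ (a * d).+1) /= ?ltnS ?leq_mul2r ?leqnSn ?orbT //.
rewrite IHa [_.+1 * _]mulSn [RHS]addnC; congr (_ + _).
rewrite -[(a * d).+1]add1n big_addn -addSn addnK.
by apply: eq_bigr => i _; rewrite fPM.
Qed.

Lemma S_mulnl_mod k a d : S k (a * d) = a * S k d %[mod d].
Proof.
rewrite /S -modn_summ (@sum_periodic (fun i => i ^ k %% d)).
  by rewrite -modnMmr modn_summ modnMmr.
by move=> i; rewrite -modnXm modnDr modnXm.
Qed.

Lemma expn_mod_pfactor q e k i :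
    prime q -> 0 < e -> 0 < k -> q ^ e %| k -> q.-1 %| k ->
  i ^ k %% q ^ e = coprime i q.
Proof.
move=> q_pr e_gt0 k_gt0 qe_k q1_k; have q_gt1 := prime_gt1 q_pr.
have qe_gt1 : 1 < q ^ e by rewrite -(expn0 q) ltn_exp2l.
have [iq_co | iq_nco] /= := boolP (coprime i q).
  have tot_k : totient (q ^ e) %| k.
    rewrite totient_pfactor // Gauss_dvd ?q1_k /=; last first.
      by rewrite coprime_sym coprimeXl // coprime_sym coprimePn ?prime_gt0.
    by apply: dvdn_trans qe_k; apply: dvdn_exp2l; apply: leq_pred.
  have iqe_co : coprime i (q ^ e) by rewrite coprimeXr.
  case/dvdnP: tot_k => c ->.
  by rewrite mulnC expnM -modnXm Euler_exp_totient // modnXm exp1n modn_small.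
have q_i : q %| i by rewrite coprime_sym prime_coprime // negbK in iq_nco.
apply/eqP; rewrite -/(dvdn _ _); apply: dvdn_trans (dvdn_exp2r k q_i).
apply: dvdn_exp2l; apply: leq_trans (dvdn_leq k_gt0 qe_k).
by rewrite ltnW // ltn_expl.
Qed.

Lemma sum_coprime_prime q : prime q -> \sum_(1 <= i < q.+1) coprime i q = q.-1.
Proof.
move=> q_pr; rewrite big_nat_recr ?prime_gt0 //= prime_coprime // dvdnn addn0.
rewrite (eq_big_nat _ _ (F2 := fun=> 1)) ?sum_nat_const_nat ?muln1 ?subn1 //.
by move=> i /andP[i_gt0 i_lt_q]; rewrite coprime_sym prime_coprime // gtnNdvd.
Qed.

Lemma S_pfactor_mod q e k :
    prime q -> 0 < e -> 0 < k -> q ^ e %| k -> q.-1 %| k ->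
  S k (q ^ e) = q.-1 * q ^ e.-1 %[mod q ^ e].
Proof.
move=> q_pr e_gt0 k_gt0 qe_k q1_k.
rewrite /S -modn_summ (eq_bigr (fun i => coprime i q : nat)); last first.
  by move=> i _; apply: expn_mod_pfactor.
rewrite -{1}(prednK e_gt0) expnSr (@sum_periodic (fun i => coprime i q : nat)).
  by rewrite sum_coprime_prime // mulnC.
by move=> i; rewrite -coprime_modl modnDr coprime_modl.
Qed.

Lemma eqn_modMl_coprime a d i j :
  coprime a d -> (a * i == a * j %[mod d]) = (i == j %[mod d]).
Proof.
move=> ad_co; wlog le_ij : i j / i <= j.
  by move=> W; case: (leqP i j) => [/W | /ltnW/W]; rewrite // eq_sym [RHS]eq_sym.
rewrite eq_sym [RHS]eq_sym !eqn_mod_dvd ?leq_mul2l ?le_ij ?orbT //.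
by rewrite -mulnBr Gauss_dvdr // coprime_sym.
Qed.

Lemma sum_expn_mulr_mod d a k : 0 < d -> coprime a d ->
  (\sum_(i < d) i ^ k) * a ^ k = \sum_(i < d) i ^ k %[mod d].
Proof.
move=> d_gt0 ad_co.
pose h (i : 'I_d) : 'I_d := Ordinal (ltn_pmod (a * i) d_gt0).
have h_inj : injective h.
  move=> i j /(congr1 val) /= /eqP; rewrite eqn_modMl_coprime // !modn_small //.
  by move/eqP/val_inj.
rewrite {2}(reindex_inj h_inj) /= -modn_summ.
rewrite [in RHS](eq_bigr (fun i : 'I_d => (a * i) ^ k %% d)) => [|i _]; last first.
  by rewrite modnXm.
rewrite modn_summ big_distrl /=; congr (_ %% _).
by apply: eq_bigr => i _; rewrite expnMn mulnC.
Qed.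

Lemma S_mod_sum_ord k d : 0 < k -> S k d = \sum_(i < d) i ^ k %[mod d].
Proof.
move=> k_gt0; rewrite /S -(big_mkord xpredT (fun i => i ^ k)).
have -> : \sum_(1 <= i < d.+1) i ^ k = \sum_(0 <= i < d.+1) i ^ k.
  by rewrite [RHS]big_ltn // exp0n.
by rewrite big_nat_recr //= -modnDmr -modnXm modnn exp0n // mod0n addn0.
Qed.

Lemma exists_expn_mod_neq1 q k :
  prime q -> ~~ (q.-1 %| k) -> exists2 a, coprime a q & a ^ k %% q != 1.
Proof.
move=> q_pr q1_nk; have q1_gt0 : 0 < q.-1 by rewrite -subn1 subn_gt0 prime_gt1.
pose units := enum [pred x : 'F_q | x != 0%R].
have : has (q.-1).-primitive_root%R units.
  apply: has_prim_root => //; last by rewrite -cardE cardC1 card_Fp.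
  - apply/allP => x; rewrite mem_enum inE => x_neq0; rewrite unity_rootE.
    apply/eqP/(GRing.mulIf x_neq0); rewrite GRing.mul1r -GRing.exprSr prednK ?prime_gt0 //.
    by have := expf_card x; rewrite card_Fp.
  - exact: enum_uniq.
case/hasP => z; rewrite mem_enum inE => z_neq0 z_prim.
have zE : (val z)%:R%R = z.
  apply: val_inj; rewrite /= val_Fp_nat // modn_small //.
  by apply: leq_trans (ltn_ord z) _; rewrite Fp_cast.
exists (val z); first by rewrite coprime_sym -unitFpE // zE GRing.unitfE.
apply: contra q1_nk => /eqP zk1; rewrite (prim_order_dvd z_prim) -zE -GRing.natrX.
by rewrite -Fp_nat_mod // zk1.
Qed.

Lemma pfactor_dvdn_S q e k a :
  prime q -> 0 < k -> coprime a q -> a ^ k %% q != 1 -> q ^ e %| S k (q ^ e).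
Proof.
move=> q_pr k_gt0 aq_co ak_neq1.
have qe_gt0 : 0 < q ^ e by rewrite expn_gt0 prime_gt0.
have ak_gt0 : 0 < a ^ k.
  rewrite expn_gt0; case: a aq_co {ak_neq1} => //; rewrite /coprime gcd0n => /eqP q_eq1.
  by move: q_pr; rewrite q_eq1.
have qe_ak1_co : coprime (q ^ e) (a ^ k).-1.
  rewrite coprimeXl // prime_coprime //; apply: contra ak_neq1 => q_ak1.
  by rewrite -(prednK ak_gt0) -addn1 -modnDml (eqP q_ak1) modn_small ?prime_gt1.
have := sum_expn_mulr_mod _ _ k qe_gt0 (coprimeXr e aq_co).
rewrite -(prednK ak_gt0) mulnS -[X in _ = X %[mod _]]addn0 => /eqP; rewrite eqn_modDl.
by rewrite mod0n -/(dvdn _ _) Gauss_dvdl // /dvdn S_mod_sum_ord.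
Qed.

Lemma dvdn_S_self_addn_divn q e n :
    prime q -> 0 < e -> q ^ e %| n -> ~~ (q ^ e %| S n n) ->
  q ^ e %| S n n + n %/ q.
Proof.
move=> q_pr e_gt0 qe_n qe_nSn; have q_gt0 := prime_gt0 q_pr.
have n_gt0 : 0 < n.
  by apply: contraNT qe_nSn; rewrite -eqn0Ngt => /eqP ->; rewrite /S big_geq.
set N := n %/ q ^ e; have nE : n = N * q ^ e by rewrite divnK.
have Sn_mod : S n n = N * S n (q ^ e) %[mod q ^ e] by rewrite {2}nE S_mulnl_mod.
have [q1_n | q1_nn] := boolP (q.-1 %| n); last first.
  have [a aq_co an_neq1] := exists_expn_mod_neq1 _ _ q_pr q1_nn.
  case/negP: qe_nSn; rewrite /dvdn Sn_mod -/(dvdn _ _).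
  by rewrite dvdn_mull // (pfactor_dvdn_S _ e _ _ q_pr n_gt0 aq_co an_neq1).
have -> : n %/ q = N * q ^ e.-1.
  by rewrite nE -(prednK e_gt0) expnSr mulnA mulnK.
rewrite /dvdn -modnDml Sn_mod -modnMmr S_pfactor_mod // modnMmr modnDml.
by rewrite -mulnDr -mulSnr prednK // -expnS prednK // modnMl.
Qed.

Lemma dvdn_partM_mulr pi m a y :
  0 < m -> 0 < a -> ((m * a)`_pi %| y * a) = (m`_pi %| y).
Proof.
move=> m_gt0 a_gt0; rewrite partnM // -{2}(partnC pi a_gt0) mulnCA [_ * a`_pi]mulnC.
by rewrite dvdn_pmul2l ?part_gt0 // Gauss_dvdl // coprime_partC.
Qed.

Lemma inW_of_part m :
  0 < m -> (forall q, q \in primes m -> m`_q %| m %/ q + 1) -> inW m.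
Proof.
move=> m_gt0 m_q_dvd; split=> //; rewrite mod0n; apply/eqP; rewrite -/(dvdn _ _).
apply/(dvdn_partP _ m_gt0) => q q_m; have {}q_m : q \in primes m by [].
rewrite (big_rem q q_m) /= addnAC dvdn_addr ?(m_q_dvd q q_m) //.
rewrite big_seq dvdn_sum // => r; rewrite mem_rem_uniq ?primes_uniq // inE.
case/andP=> r_neq_q; rewrite mem_primes => /and3P[r_pr _ r_m].
have q_pr : prime q by move: q_m; rewrite mem_primes => /andP[].
have m_q_r_co : coprime m`_q r.
  by rewrite p_part coprimeXl // prime_coprime // dvdn_prime2 // eq_sym.
by rewrite -(Gauss_dvdl _ m_q_r_co) divnK // dvdn_part.
Qed.

Lemma inW_of_S_self_mod a m :
  0 < a -> 0 < m -> S (m * a) (m * a) = a %[mod m * a] -> inW m.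
Proof.
move=> a_gt0 m_gt0 Sma; apply: inW_of_part => // q q_m.
have:= q_m; rewrite mem_primes => /and3P[q_pr _ q_m_dvd].
have ma_gt0 : 0 < m * a by rewrite muln_gt0 m_gt0.
have ma_q_dvd : (m * a)`_q %| m * a := dvdn_part q (m * a).
have Sma_q : S (m * a) (m * a) = a %[mod (m * a)`_q].
  by rewrite -(modn_dvdm _ ma_q_dvd) Sma modn_dvdm.
have logn_gt0 : 0 < logn q (m * a) by rewrite logn_gt0 mem_primes q_pr ma_gt0 dvdn_mulr.
have ma_q_ndvd : ~~ ((m * a)`_q %| S (m * a) (m * a)).
  rewrite /dvdn Sma_q -/(dvdn _ _) -[X in _ %| X]mul1n dvdn_partM_mulr //.
  by rewrite dvdn1 p_part_eq1 negbK.
have := dvdn_S_self_addn_divn _ _ (m * a) q_pr logn_gt0; rewrite -p_part.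
move=> /(_ ma_q_dvd ma_q_ndvd); rewrite /dvdn -modnDml Sma_q modnDml -/(dvdn _ _).
by rewrite -divn_mulAC // -[X in X + _]mul1n -mulnDl addnC dvdn_partM_mulr.
Qed.

Lemma sqr_dvdn_S d n k : d ^ 3 %| n -> d ^ 2 %| S k n.
Proof.
move=> d3_n; have nE : n = n %/ d ^ 3 * d * d ^ 2 by rewrite -mulnA -expnS divnK.
have d_S : d %| S k (d ^ 2) by rewrite /dvdn -mulnn S_mulnl_mod modnMr.
rewrite nE /dvdn S_mulnl_mod -/(dvdn _ _) -mulnA dvdn_mull //.
by rewrite -mulnn dvdn_mul.
Qed.

Lemma S_prime_mod_ndvd_cube p k n : prime p -> S k n = p %[mod n] -> ~~ (p ^ 3 %| n).
Proof.
move=> p_pr Skn; apply/negP => p3_n; have p_gt0 := prime_gt0 p_pr.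
have p2_n : p ^ 2 %| n by apply: dvdn_trans p3_n; rewrite dvdn_exp2l.
have := sqr_dvdn_S _ _ k p3_n; rewrite /dvdn -(modn_dvdm _ p2_n) Skn modn_dvdm //.
by move/(dvdn_leq p_gt0); rewrite -mulnn leqNgt ltn_Pmull ?prime_gt1.
Qed.

Theorem mainTheorem14 (p n : nat) (hp : prime p) (hn : 0 < n) :
  (inM1 p n \/ inM2 p n) <-> (p %| n /\ inW (n %/ p) /\ inFrakM (n %/ p) p).
Proof.
have p_gt0 := prime_gt0 hp.
split=> [M12_n | [p_n [_ [_ Snn]]]].
  have [Snn p_n] : S n n = p %[mod n] /\ p %| n.
    case: M12_n => [[[_ Snn] [p_n _]] | [[_ Snn] [p2_n _]]] //.
    by split; last by apply: dvdn_trans p2_n; rewrite -mulnn dvdn_mulr.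
  have nE : n %/ p * p = n := divnK p_n.
  have np_gt0 : 0 < n %/ p by rewrite divn_gt0 // dvdn_leq.
  split=> //; split; first by apply: (inW_of_S_self_mod _ _ p_gt0 np_gt0); rewrite nE.
  by split; rewrite // nE.
rewrite divnK // in Snn; have p3_nn := S_prime_mod_ndvd_cube _ _ _ hp Snn.
by have [p2_n | p2_nn] := boolP (p ^ 2 %| n); [right | left]; do !split.
Qed.
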